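(* Let $\theta$ be a complex Garsia number whose minimal polynomial has constant term $\pm2$, let $\lambda=1/\theta$, and for $n\ge1$ let $\mathcal A_\lambda^{(n)}=\{\sum_{k=0}^{n-1}a_k\lambda^k: a_k\in\{-1,1\}\}$. Then (a) $\#\mathcal A_\lambda^{(n)}=2^n$ for all $n\ge1$; and (b) there exists $c>0$ such that for all $n\ge1$ and all distinct $x,y\in\mathcal A_\lambda^{(n)}$, $|x-y|\ge c\cdot 2^{-n/2}$.
   Context: An algebraic integer $\theta$ with $|\theta|>1$ is a Garsia number if all its Galois conjugates have modulus greater than one; a complex Garsia number is a non-real Garsia number. *)

From mathcomp Require Import all_boot all_order all_algebra all_field.
Set Implicit Arguments. Unset Strict Implicit. Unset Printing Implicit Defensive.
Import Order.TTheory GRing.Theory Num.Theory.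
Local Open Scope ring_scope.

Definition garsia (theta : algC) : Prop :=
  [/\ theta \in Aint, 1 < `|theta| &
      forall z : algC, root (minCpoly theta) z -> 1 < `|z|].

Definition complex_garsia (theta : algC) : Prop :=
  garsia theta /\ theta \notin Num.real.

Definition digit (b : bool) : algC := if b then 1 else -1.

(* A_lambda^(n) as a list (possibly with repetitions) of all sums
   sum_{k<n} a_k lambda^k, a_k in {-1,1} *)
Definition Aset (lam : algC) (n : nat) : seq algC :=
  [seq \sum_(k < n) digit (a k) * lam ^+ k | a : {ffun 'I_n -> bool}].

From mathcomp Require Import all_boot all_order all_algebra all_field.
From mathcomp Require Import perm mpoly.
From mathcomp Require Import zify ring.
Set Implicit Arguments. Unset Strict Implicit. Unset Printing Implicit Defensive.
Import Order.TTheory GRing.Theory Num.Theory.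
Local Open Scope ring_scope.

(* Two points of [Aset theta^-1 n] differ by [2 w] with
   [w = sum_(k < n) e_k theta^-k] and digits [e_k] in {0, 1, -1}, and
   [theta^n w = theta P(theta)] for the integer polynomial
   [P = sum_k e_k X^(n-1-k)]. The conjugates [c] of [theta] satisfy
   [prod |c| = 2], so no integer polynomial with constant coefficient [+-1]
   vanishes at [theta] (its quotient by [X] would have norm of modulus [1/2]);
   hence [w = 0] forces all digits to vanish and the [2^n] points are distinct.
   For [w != 0] the norm of [P] is a nonzero integer, which gives
   [2 <= 2^n prod_c |w(c)|]. The factors at [theta] and at its complex
   conjugate both equal [|w|], and the others are bounded by a constant since
   [|c| > 1]; so [|w|^2 >= const / 2^n]. *)

Section MmapFacts.
Variables (d : nat) (R S : comNzRingType) (f : {rmorphism R -> S}) (v : 'I_d -> S).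

Lemma mmapXU i : mmap f v ('X_i : {mpoly R[d]}) = v i.
Proof. by rewrite mmapX mmap1U. Qed.

Lemma mmap_comp (t : {mpoly R[d]}) (lq : d.-tuple {mpoly R[d]}) :
  mmap f v (t \mPo lq) = mmap f (fun i => mmap f v (tnth lq i)) t.
Proof.
rewrite /comp_mpoly [mmap _ (tnth lq) t]/mmap raddf_sum /=.
apply: eq_bigr => m _; rewrite rmorphM /= mmapC; congr (_ * _).
by rewrite /mmap1 rmorph_prod; apply: eq_bigr => i _; rewrite rmorphXn.
Qed.

Lemma mmap_mesym k : mmap f v (mesym d R k) = (mesym d S k).@[v].
Proof.
rewrite /mesym !raddf_sum /=; apply: eq_bigr => h _.
by rewrite !rmorph_prod /=; apply: eq_bigr => i _; rewrite mmapXU mevalXU.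
Qed.

End MmapFacts.

Lemma msymXU (d : nat) (R : comNzRingType) (s : 'S_d) i :
  msym s ('X_i : {mpoly R[d]}) = 'X_(s i).
Proof. by rewrite /msym mmapXU. Qed.

Lemma mmap_intr_int (d : nat) (v : 'I_d -> algC) (t : {mpoly int[d]}) :
  (forall i, v i \in Num.int) -> mmap intr v t \in Num.int.
Proof.
move=> vZ; apply: rpred_sum => m _; rewrite rpredM ?rpred_int //.
by apply: rpred_prod => i _; apply: rpredX.
Qed.

(* [Q(X_1) ... Q(X_d)] is symmetric, hence a polynomial over [int] in the
   elementary symmetric polynomials, whose values at the [c_i] are up to sign
   the coefficients of [prod (X - c_i)]. *)
Lemma prod_horner_int (rs : seq algC) (Q : {poly algC}) :
  \prod_(c <- rs) ('X - c%:P) \is a polyOver Num.int -> Q \is a polyOver Num.int ->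
  \prod_(c <- rs) Q.[c] \in Num.int.
Proof.
rewrite -[rs]/(tval (in_tuple rs)); move: (in_tuple rs) => cs.
set d := size rs in cs *; move=> csZ /floorpP [qz ->].
pose F (y : {mpoly int[d]}) := \sum_(j < size qz) (qz`_j)%:MP * y ^+ j.
pose pe := \prod_(i < d) F 'X_i.
have pe_sym : pe \is symmetric.
  apply/issymP => s; rewrite /pe rmorph_prod /=.
  rewrite [RHS](reindex_inj (@perm_inj _ s)) /=.
  apply: eq_bigr => i _; rewrite /F rmorph_sum /=; apply: eq_bigr => j _.
  by rewrite rmorphM rmorphXn /= msymXU /msym mmapC.
have [t [Dpe _]] := sym_fundamental pe_sym.
have <- : mmap intr (tnth cs) pe = \prod_(c <- cs) (map_poly intr qz).[c].
  rewrite big_tuple rmorph_prod; apply: eq_bigr => i _.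
  rewrite /F rmorph_sum /= horner_coef size_map_inj_poly //; last exact: intr_inj.
  by apply: eq_bigr => j _; rewrite rmorphM rmorphXn /= mmapC mmapXU coef_map.
rewrite -Dpe mmap_comp; apply: mmap_intr_int => i.
rewrite tnth_map /= tnth_ord_tuple mmap_mesym.
have lt_i : (i.+1 < d.+1)%N by rewrite ltnS.
have := mroots_coeff cs (Ordinal lt_i) => /= /(congr1 (fun x => (-1) ^+ i.+1 * x)).
rewrite mulrA -exprMn mulrNN mulr1 expr1n mul1r => <-.
by rewrite rpredM ?rpredX ?rpredN ?rpred1 //; apply/polyOverP.
Qed.

Lemma root_minCpoly_int_poly (x y : algC) (Q : {poly algC}) :
  root (minCpoly x) y -> Q \is a polyOver Num.int -> root Q x -> root Q y.
Proof.
move=> y_conj /floorpP[qz ->] /eqP qz_x.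
have [p [Dp _] min_p] := minCpolyP x.
pose q := map_poly (intr : int -> rat) qz.
have Dq : map_poly intr qz = map_poly ratr q :> {poly algC}.
  by apply/polyP => i; rewrite /q !coef_map /= ratr_int.
have p_dvd_q : (p %| q)%R by rewrite -min_p -Dq; apply/eqP.
by rewrite Dq; apply: root_dvdp y_conj; rewrite Dp dvdp_map.
Qed.

Lemma root_minCpoly_sym (x y : algC) : root (minCpoly x) y -> root (minCpoly y) x.
Proof.
have [p [Dp p_monic] min_p] := minCpolyP x.
have [py [Dpy py_monic] min_py] := minCpolyP y.
move=> y_conj; have /dvdpP[K DK] : (py %| p)%R by rewrite -min_py -Dp.
have : root (map_poly ratr p) x by rewrite -Dp root_minCpoly.
rewrite DK rmorphM rootM => /orP [K_x|]; last by rewrite Dpy.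
have p_neq0 := monic_neq0 p_monic.
have K_neq0 : K != 0 by apply: contraNneq p_neq0; rewrite DK => ->; rewrite mul0r.
have py_neq0 := monic_neq0 py_monic.
have p_dvd_K : (p %| K)%R by rewrite -min_p.
have := dvdp_leq K_neq0 p_dvd_K; rewrite DK size_mul //.
have := size_minCpoly y; rewrite Dpy size_map_poly.
by case: (size py) => [|[|m]] //= _; rewrite !addnS /= ltnNge leq_addr.
Qed.

Definition half_diff (a b : bool) : algC := if a == b then 0 else digit a.

Lemma digitB a b : digit a - digit b = 2 * half_diff a b.
Proof. by case: a; case: b; rewrite /half_diff /digit /= ?subrr ?mulr0 //; ring. Qed.

Lemma half_diff_int a b : half_diff a b \in Num.int.
Proof. by case: a; case: b; rewrite /half_diff /digit /= ?rpredN ?rpred1 ?rpred0. Qed.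

Lemma half_diff_le1 a b : `|half_diff a b| <= 1.
Proof. by case: a; case: b; rewrite /half_diff /digit /= ?normrN ?normr1 ?normr0 ?ler01. Qed.

Lemma half_diff_eq0 a b : half_diff a b = 0 -> a = b.
Proof. by case: a; case: b; rewrite /half_diff /digit //= => /eqP; rewrite ?oppr_eq0 oner_eq0. Qed.

Definition digit_diffs n (a b : 'I_n -> bool) (k : nat) : algC :=
  if insub k is Some i then half_diff (a i) (b i) else 0.

Lemma digit_diffs_ord n (a b : 'I_n -> bool) (i : 'I_n) :
  digit_diffs a b i = half_diff (a i) (b i).
Proof. by rewrite /digit_diffs valK. Qed.

Lemma digit_diffs_int n (a b : 'I_n -> bool) k : digit_diffs a b k \in Num.int.
Proof. by rewrite /digit_diffs; case: insub => [i|]; rewrite ?half_diff_int ?rpred0. Qed.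

Lemma digit_diffs_le1 n (a b : 'I_n -> bool) k : `|digit_diffs a b k| <= 1.
Proof. by rewrite /digit_diffs; case: insub => [i|]; rewrite ?half_diff_le1 ?normr0 ?ler01. Qed.

Section Expansion.
Variable F : fieldType.
Implicit Types (e : nat -> F) (c : F).

Definition expansion n e c : F := \sum_(k < n) e k * c^-1 ^+ k.

Definition expansion_poly n e : {poly F} := \sum_(k < n) e k *: 'X^(n.-1 - k).

Lemma expansion_recr n e c : expansion n.+1 e c = expansion n e c + e n * c^-1 ^+ n.
Proof. exact: big_ord_recr. Qed.

Lemma horner_expansion_poly n e c :
  c != 0 -> (expansion_poly n e).[c] * c = c ^+ n * expansion n e c.
Proof.
move=> c_neq0; rewrite horner_sum mulr_suml mulr_sumr; apply: eq_bigr => k _.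
rewrite hornerZ hornerXn -mulrA -exprSr exprVn mulrCA; congr (e k * _).
have lt_k := ltn_ord k; have -> : (n.-1 - k).+1 = (n - k)%N by lia.
have -> : c ^+ n = c ^+ (n - k) * c ^+ k by rewrite -exprD subnK // ltnW.
by rewrite mulfK // expf_neq0.
Qed.

Lemma expansion_poly_coef0 n e : (expansion_poly n.+1 e)`_0 = e n.
Proof.
rewrite coef_sum big_ord_recr /= coefZ coefXn subnn eqxx mulr1 big1 ?add0r //.
move=> k _; rewrite coefZ coefXn; have lt_k := ltn_ord k.
have -> : (0 == n - k)%N = false by apply/eqP; lia.
by rewrite mulr0.
Qed.

End Expansion.

Lemma expansion_poly_int n (e : nat -> algC) :
  (forall k, e k \in Num.int) -> expansion_poly n e \is a polyOver Num.int.
Proof.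
move=> eZ; apply/polyOverP => i; rewrite coef_sum; apply: rpred_sum => k _.
by rewrite coefZ coefXn rpredM ?rpred_nat.
Qed.

Section ExpansionBound.
Variable F : numFieldType.
Implicit Types (e : nat -> F) (c : F).

Definition tail_bound c : F := (1 - `|c|^-1)^-1.

Lemma tail_bound_ge1 c : 1 < `|c| -> 1 <= tail_bound c.
Proof.
move=> c_gt1; have c_gt0 := lt_trans ltr01 c_gt1.
have lt1_cV : 0 < 1 - `|c|^-1 by rewrite subr_gt0 invf_lt1.
by rewrite invf_ge1 // gerBl invr_ge0 (ltW c_gt0).
Qed.

Lemma sum_expr_le (t : F) n : 0 <= t -> t < 1 -> \sum_(k < n) t ^+ k <= (1 - t)^-1.
Proof.
move=> t_ge0 t_lt1; have t1_gt0 : 0 < 1 - t by rewrite subr_gt0.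
have E : (1 - t) * \sum_(k < n) t ^+ k = 1 - t ^+ n.
  by rewrite -[1 - t]opprB -[1 - t ^+ n]opprB subrX1 mulNr.
rewrite -[leLHS](mulKf (lt0r_neq0 t1_gt0)) E -[leRHS]mulr1.
apply: ler_wpM2l; first by rewrite invr_ge0 (ltW t1_gt0).
by rewrite gerBl exprn_ge0.
Qed.

Lemma norm_expansion_le n e c :
  (forall k, `|e k| <= 1) -> 1 < `|c| -> `|expansion n e c| <= tail_bound c.
Proof.
move=> e_le1 c_gt1; have c_gt0 := lt_trans ltr01 c_gt1.
have c_neq0 : c != 0 by rewrite -normr_gt0.
apply: le_trans (ler_norm_sum _ _ _) _.
apply: le_trans (sum_expr_le n _ _); last by rewrite invf_lt1.
  apply: ler_sum => k _; rewrite normrM normrX normrV ?unitfE //.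
  by apply: ler_piMl => //; rewrite exprn_ge0 // invr_ge0 (ltW c_gt0).
by rewrite invr_ge0 (ltW c_gt0).
Qed.

End ExpansionBound.

Lemma expansion_conjC n (e : nat -> algC) (c : algC) :
  (forall k, e k \in Num.int) -> expansion n e c^* = (expansion n e c)^*.
Proof.
move=> eZ; rewrite /expansion rmorph_sum; apply: eq_bigr => k _.
by rewrite rmorphM rmorphXn fmorphV; congr (_ * _); apply/esym/conj_intr.
Qed.

Lemma digit_sumB n (a b : 'I_n -> bool) (c : algC) :
  \sum_(k < n) digit (a k) * c^-1 ^+ k - \sum_(k < n) digit (b k) * c^-1 ^+ k
  = 2 * expansion n (digit_diffs a b) c.
Proof.
rewrite -sumrB mulr_sumr; apply: eq_bigr => k _.
by rewrite digit_diffs_ord -mulrBl digitB mulrA.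
Qed.

Section GarsiaNumber.
Variable theta : algC.
Hypothesis theta_Aint : theta \in Aint.
Hypothesis conj_gt1 : forall z, root (minCpoly theta) z -> 1 < `|z|.
Hypothesis minCpoly_coef0 : (minCpoly theta)`_0 = 2 \/ (minCpoly theta)`_0 = -2.

Definition conjugates := sval (closed_field_poly_normal (minCpoly theta)).

Lemma minCpoly_conjugates : minCpoly theta = \prod_(c <- conjugates) ('X - c%:P).
Proof.
rewrite /conjugates; case: closed_field_poly_normal => rs /= ->.
by rewrite (monicP (minCpoly_monic theta)) scale1r.
Qed.

Lemma mem_conjugates c : (c \in conjugates) = root (minCpoly theta) c.
Proof. by rewrite minCpoly_conjugates root_prod_XsubC. Qed.

Lemma theta_conjugate : theta \in conjugates.
Proof. by rewrite mem_conjugates root_minCpoly. Qed.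

Lemma conjugates_gt1 c : c \in conjugates -> 1 < `|c|.
Proof. by rewrite mem_conjugates => /conj_gt1. Qed.

Lemma conjugates_neq0 c : c \in conjugates -> c != 0.
Proof. by move/conjugates_gt1; apply: contraTneq => ->; rewrite normr0 ltr10. Qed.

Lemma theta_neq0 : theta != 0.
Proof. exact: conjugates_neq0 theta_conjugate. Qed.

Lemma prod_norm_conjugates : \prod_(c <- conjugates) `|c| = 2.
Proof.
have : `|(minCpoly theta)`_0| = 2 by case: minCpoly_coef0 => ->; rewrite ?normrN normr_nat.
rewrite -horner_coef0 minCpoly_conjugates horner_prod normr_prod => <-.
by apply: eq_bigr => c _; rewrite hornerXsubC sub0r normrN.
Qed.

Lemma prod_conjugates_horner_int Q :
  Q \is a polyOver Num.int -> \prod_(c <- conjugates) Q.[c] \in Num.int.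
Proof. by apply: prod_horner_int; rewrite -minCpoly_conjugates. Qed.

Lemma root_conjugate Q c : Q \is a polyOver Num.int -> c \in conjugates ->
  root Q c = root Q theta.
Proof.
rewrite mem_conjugates => QZ c_conj; apply/idP/idP.
  exact: root_minCpoly_int_poly (root_minCpoly_sym c_conj) QZ.
exact: root_minCpoly_int_poly c_conj QZ.
Qed.

(* If [Q = Q(0) + X R] vanished at every conjugate [c], then [R(c) c = - Q(0)]
   and the integer [prod R(c)] would have modulus [1/2]. *)
Lemma not_root_coef0_norm1 Q : Q \is a polyOver Num.int -> `|Q`_0| = 1 ->
  ~~ root Q theta.
Proof.
move=> QZ Q0_norm1; apply/negP => Q_theta.
pose R := Poly (behead Q).
have DQ : Q = cons_poly Q`_0 R.
  apply/polyP => i; rewrite coef_cons coef_Poly.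
  by case: i => [|i] //=; rewrite nth_behead.
have RZ : R \is a polyOver Num.int.
  by apply/polyOverP => i; rewrite coef_Poly nth_behead; apply/polyOverP.
have R_conj c : c \in conjugates -> `|R.[c]| * `|c| = 1.
  move=> c_conj; have := root_conjugate QZ c_conj; rewrite Q_theta {1}DQ.
  rewrite rootE horner_cons addr_eq0 => /eqP Rc.
  by rewrite -normrM Rc normrN.
have : `|\prod_(c <- conjugates) R.[c]| * 2 = 1.
  by rewrite -prod_norm_conjugates normr_prod -big_split big1_seq //= => c /R_conj.
have /natrP[m ->] : `|\prod_(c <- conjugates) R.[c]| \in Num.nat.
  by rewrite natr_norm_int ?prod_conjugates_horner_int.
by move/eqP; rewrite -natrM pnatr_eq1; lia.
Qed.

Lemma root_expansion_poly n e :
  root (expansion_poly n e) theta = (expansion n e theta == 0).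
Proof.
rewrite rootE -[_ == 0]orbF -(negbTE theta_neq0) -mulf_eq0.
by rewrite horner_expansion_poly ?theta_neq0 // mulf_eq0 expf_eq0 (negbTE theta_neq0) andbF.
Qed.

Lemma expansion_eq0 n e : (forall k, e k \in Num.int) -> (forall k, `|e k| <= 1) ->
  expansion n e theta = 0 -> forall k, (k < n)%N -> e k = 0.
Proof.
move=> e_int e_le1; elim: n => [|n IHn] // w0 k lt_k.
have en_eq0 : e n = 0.
  have : root (expansion_poly n.+1 e) theta by rewrite root_expansion_poly w0.
  apply: contraTeq => en_neq0; apply: not_root_coef0_norm1.
    exact: expansion_poly_int.
  by rewrite expansion_poly_coef0; apply/le_anti; rewrite e_le1 norm_intr_ge1.
move: w0 lt_k; rewrite expansion_recr en_eq0 mul0r addr0 ltnS leq_eqVlt.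
by move=> w0 /orP[/eqP -> // | /(IHn w0)].
Qed.

Lemma size_Aset n : size (undup (Aset theta^-1 n)) = (2 ^ n)%N.
Proof.
have digits_inj : injective
    (fun a : {ffun 'I_n -> bool} => \sum_(k < n) digit (a k) * theta^-1 ^+ k).
  move=> a b /= /eqP; rewrite -subr_eq0 digit_sumB mulf_eq0 pnatr_eq0 /= => /eqP w0.
  apply/ffunP => i; apply: half_diff_eq0; rewrite -digit_diffs_ord.
  exact: expansion_eq0 (digit_diffs_int a b) (digit_diffs_le1 a b) w0 _ (ltn_ord i).
rewrite undup_id ?(map_inj_uniq digits_inj) ?enum_uniq //.
by rewrite size_map -cardT card_ffun card_bool card_ord.
Qed.

Definition conjugates_bound := \prod_(c <- conjugates) tail_bound c.

Lemma conjugates_bound_ge1 : 1 <= conjugates_bound.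
Proof.
rewrite /conjugates_bound big_seq; apply: (big_ind (fun x => 1 <= x)) => //.
  exact: mulr_ege1.
by move=> c /conjugates_gt1/tail_bound_ge1.
Qed.

(* The norm [N] of [expansion_poly n e] is a nonzero integer, and
   [|N| prod |c| = prod |c|^n |expansion n e c|]. *)
Lemma prod_expansion_ge n e : (forall k, e k \in Num.int) -> expansion n e theta != 0 ->
  2 <= 2 ^+ n * \prod_(c <- conjugates) `|expansion n e c|.
Proof.
move=> e_int w_neq0; set P := expansion_poly n e.
have P_conj c : c \in conjugates -> P.[c] != 0.
  by move=> c_conj; rewrite -rootE root_conjugate ?expansion_poly_int // root_expansion_poly.
set N := \prod_(c <- conjugates) P.[c].
have N_ge1 : 1 <= `|N|.
  apply: norm_intr_ge1; first exact/prod_conjugates_horner_int/expansion_poly_int.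
  by rewrite prodf_seq_neq0; apply/allP.
have normNE : `|N| * 2 = 2 ^+ n * \prod_(c <- conjugates) `|expansion n e c|.
  rewrite -prod_norm_conjugates -prodrXl /N normr_prod -!big_split /=.
  apply: eq_big_seq => c c_conj.
  by rewrite -normrM horner_expansion_poly ?conjugates_neq0 // normrM normrX.
by rewrite -normNE -{1}(mul1r 2) ler_pM2r.
Qed.

Hypothesis theta_nonreal : theta \notin Num.real.

Lemma conjC_conjugate : theta^* \in conjugates.
Proof. by rewrite mem_conjugates -(minCpoly_aut Num.conj) root_minCpoly. Qed.

(* The factors at [theta] and [theta^*] are equal; the others are bounded. *)
Lemma prod_expansion_le n e : (forall k, e k \in Num.int) -> (forall k, `|e k| <= 1) ->
  \prod_(c <- conjugates) `|expansion n e c|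
    <= `|expansion n e theta| ^+ 2 * conjugates_bound.
Proof.
move=> e_int e_le1.
have conjC_rem : theta^* \in rem theta conjugates.
  by apply: rem_mem conjC_conjugate; rewrite -CrealE.
have perm_conj : perm_eq conjugates
    [:: theta, theta^* & rem theta^* (rem theta conjugates)].
  by apply: perm_trans (perm_to_rem theta_conjugate) _; rewrite perm_cons perm_to_rem.
set rest := rem _ _ in perm_conj.
have rest_bound c : c \in rest -> 1 <= tail_bound c.
  by move=> /mem_rem/mem_rem/conjugates_gt1/tail_bound_ge1.
rewrite /conjugates_bound !(perm_big _ perm_conj) /= !big_cons.
rewrite expansion_conjC // norm_conjC [leLHS]mulrA -expr2.
apply: ler_wpM2l; first exact: exprn_ge0.
apply: (@le_trans _ _ (\prod_(c <- rest) tail_bound c)).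
  rewrite !big_seq; apply: ler_prod => c c_rest; rewrite normr_ge0 norm_expansion_le //.
  by move: c_rest => /mem_rem/mem_rem/conjugates_gt1.
rewrite mulrA ler_peMl //.
  by rewrite big_seq prodr_ge0 // => c /rest_bound/(le_trans ler01).
by rewrite mulr_ege1 // tail_bound_ge1 ?conjugates_gt1 ?theta_conjugate ?conjC_conjugate.
Qed.

Lemma Aset_separated n x y : x \in Aset theta^-1 n -> y \in Aset theta^-1 n -> x != y ->
  conjugates_bound^-1 / sqrtC 2 ^+ n <= `|x - y|.
Proof.
move=> /mapP[a _ ->] /mapP[b _ ->]; rewrite -subr_eq0 digit_sumB.
set w := expansion n _ theta => w2_neq0.
have w_neq0 : w != 0 by apply: contraNneq w2_neq0 => ->; rewrite mulr0.
set K := conjugates_bound; have K_ge1 : 1 <= K := conjugates_bound_ge1.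
have K_gt0 : 0 < K := lt_le_trans ltr01 K_ge1.
have w2_ge : 2 / K <= 2 ^+ n * `|w| ^+ 2.
  rewrite ler_pdivrMr // -mulrA.
  apply: le_trans (prod_expansion_ge (digit_diffs_int a b) w_neq0) _.
  apply: ler_wpM2l; first exact: exprn_ge0.
  exact: prod_expansion_le (digit_diffs_int a b) (digit_diffs_le1 a b).
have sqrt2n_gt0 : 0 < sqrtC 2 ^+ n :> algC by rewrite exprn_gt0 // sqrtC_gt0 ltr0n.
have Kw : K^-1 <= sqrtC 2 ^+ n * `|w|.
  have Kinv_ge0 : 0 <= K^-1 by rewrite invr_ge0 (ltW K_gt0).
  rewrite -(ler_pXn2r (_ : 0 < 2)%N) ?nnegrE ?mulr_ge0 ?(ltW sqrt2n_gt0) //.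
  rewrite exprMn -exprM mulnC exprM sqrtCK; apply: le_trans w2_ge.
  rewrite expr2 ler_pM2r ?invr_gt0 //; apply: le_trans (ler1n _ 2).
  by rewrite invf_le1.
rewrite ler_pdivrMr // normrM normr_nat mulrC; apply: le_trans Kw _.
apply: ler_wpM2l; first exact: ltW sqrt2n_gt0.
by rewrite ler_peMl ?ler1n.
Qed.

End GarsiaNumber.

Theorem mainTheorem10 (theta : algC) :
  complex_garsia theta ->
  ((minCpoly theta)`_0 = 2 \/ (minCpoly theta)`_0 = -2) ->
  let lam := theta^-1 in
  (forall n : nat, (1 <= n)%N -> size (undup (Aset lam n)) = (2 ^ n)%N) /\
  (exists c : algC, 0 < c /\
     forall n : nat, (1 <= n)%N ->
       forall x y : algC, x \in Aset lam n -> y \in Aset lam n -> x != y ->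
         c / sqrtC 2 ^+ n <= `|x - y|).
Proof.
move=> [[theta_Aint _ conj_gt1] theta_nonreal] coef0 lam; split=> [n _|].
  exact: size_Aset theta_Aint conj_gt1 coef0 n.
exists (conjugates_bound theta)^-1; split.
  by rewrite invr_gt0 (lt_le_trans ltr01) ?conjugates_bound_ge1.
move=> n _ x y; exact: Aset_separated theta_Aint conj_gt1 coef0 theta_nonreal n x y.
Qed.
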